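(* Let $A\in\mathcal{M}_n(\mathbb{H})$ be an upper triangular nilpotent matrix that is cycle-free. Then $W(A)$ is a closed disk $\mathbb{D}_{\mathbb{H}}(0,r)$ centered at the origin, for some $r\ge0$.
   Context: $\mathbb{H}$ denotes the real quaternions. The numerical range of $A\in\mathcal{M}_n(\mathbb{H})$ is $W(A)=\{\mathbf{x}^*A\mathbf{x}:\mathbf{x}\in\mathbb{H}^n,\ \mathbf{x}^*\mathbf{x}=1\}$. $\mathbb{D}_{\mathbb{H}}(c,r)=\{q\in\mathbb{H}:|q-c|\le r\}$. The graph $\mathcal{G}_A$ of $A=[a_{ij}]$ is the undirected graph on $\{1,\dots,n\}$ with an edge between $i$ and $j$ (a loop if $i=j$) whenever $a_{ij}\ne0$ or $a_{ji}\ne0$; $A$ is cycle-free if $\mathcal{G}_A$ contains no cycle (loops count as cycles). *)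

From Stdlib Require Import Reals List.
Import ListNotations.
Open Scope R_scope.

Record quat : Type := mkQ { qre : R; qi : R; qj : R; qk : R }.

Definition qzero : quat := mkQ 0 0 0 0.
Definition qone : quat := mkQ 1 0 0 0.
Definition qadd (p q : quat) : quat :=
  mkQ (qre p + qre q) (qi p + qi q) (qj p + qj q) (qk p + qk q).
Definition qsub (p q : quat) : quat :=
  mkQ (qre p - qre q) (qi p - qi q) (qj p - qj q) (qk p - qk q).
Definition qmul (p q : quat) : quat :=
  mkQ (qre p * qre q - qi p * qi q - qj p * qj q - qk p * qk q)
      (qre p * qi q + qi p * qre q + qj p * qk q - qk p * qj q)
      (qre p * qj q - qi p * qk q + qj p * qre q + qk p * qi q)
      (qre p * qk q + qi p * qj q - qj p * qi q + qk p * qre q).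
Definition qconj (q : quat) : quat := mkQ (qre q) (- qi q) (- qj q) (- qk q).
Definition qnorm (q : quat) : R :=
  sqrt (qre q * qre q + qi q * qi q + qj q * qj q + qk q * qk q).

Fixpoint qsum (n : nat) (f : nat -> quat) : quat :=
  match n with
  | O => qzero
  | S m => qadd (qsum m f) (f m)
  end.

(** Vectors in H^n and matrices in M_n(H): only indices < n are relevant. *)
Definition qvec := nat -> quat.
Definition qmat := nat -> nat -> quat.

Definition qdot (n : nat) (x y : qvec) : quat :=
  qsum n (fun i => qmul (qconj (x i)) (y i)).

Definition qmatvec (n : nat) (A : qmat) (x : qvec) : qvec :=
  fun i => qsum n (fun j => qmul (A i j) (x j)).

Definition qmatmul (n : nat) (A B : qmat) : qmat :=
  fun i j => qsum n (fun l => qmul (A i l) (B l j)).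

Definition qmat1 : qmat := fun i j => if Nat.eqb i j then qone else qzero.

Fixpoint qmatpow (n : nat) (A : qmat) (k : nat) : qmat :=
  match k with
  | O => qmat1
  | S k' => qmatmul n A (qmatpow n A k')
  end.

Definition numrange (n : nat) (A : qmat) (q : quat) : Prop :=
  exists x : qvec, qdot n x x = qone /\ q = qdot n x (qmatvec n A x).

Definition qdisk (c : quat) (r : R) (q : quat) : Prop := qnorm (qsub q c) <= r.

Definition upper_triangular (n : nat) (A : qmat) : Prop :=
  forall i j, (i < n)%nat -> (j < n)%nat -> (j < i)%nat -> A i j = qzero.

Definition nilpotent (n : nat) (A : qmat) : Prop :=
  exists k : nat, forall i j, (i < n)%nat -> (j < n)%nat -> qmatpow n A k i j = qzero.

(** Graph G_A on {0,...,n-1}: i ~ j iff a_ij <> 0 or a_ji <> 0 (i = j gives a loop). *)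
Definition gadj (A : qmat) (i j : nat) : Prop := A i j <> qzero \/ A j i <> qzero.

Definition has_long_cycle (n : nat) (A : qmat) : Prop :=
  exists l : list nat,
    (3 <= length l)%nat /\ NoDup l /\ Forall (fun v => (v < n)%nat) l /\
    forall k, (k < length l)%nat ->
      gadj A (nth k l O) (nth (S k mod length l) l O).

Definition cycle_free (n : nat) (A : qmat) : Prop :=
  (forall i, (i < n)%nat -> ~ gadj A i i) /\ ~ has_long_cycle n A.

From Stdlib Require Import Reals List Lia Lra Classical FunctionalExtensionality.
From mathcomp Require all_boot all_order all_algebra all_classical all_reals all_analysis
  lra Rstruct Rstruct_topology.
Open Scope R_scope.

(* Put b_ij = |a_ij| and Q(y) = sum_ij b_ij y_i y_j for real vectors y, and let
   r = max Q over the unit sphere of R^n; by compactness the maximum exists, and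
   since b >= 0 it is attained at a nonnegative vector y0.
   (1) W(A) is inside the disk: |x^*Ax| <= Q(|x_1|, ..., |x_n|) <= r, by the
       triangle inequality and multiplicativity of the quaternion modulus.
   (2) Every rho in [0, r] is a value of Q on the sphere: along the normalised
       segment from e_0 (where Q = b_00 = 0, as A has no loop) to y0, Q moves
       continuously from 0 to r (intermediate value theorem).
   (3) The support graph of A is a forest and no pair i, j carries both a_ij and
       a_ji, so for every unit quaternion u there are unit quaternions d_i with
       conj(d_i) a_ij d_j = |a_ij| u on every edge: remove a leaf, label the rest
       by induction and solve the single edge equation at the leaf.
   Then x_i = y_i d_i is a unit vector with x^*Ax = Q(y) u, which reaches every
   q = |q| u of the disk. *)

Definition qnorm2 (q : quat) : R :=
  qre q * qre q + qi q * qi q + qj q * qj q + qk q * qk q.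
Definition qscale (c : R) (q : quat) : quat :=
  mkQ (c * qre q) (c * qi q) (c * qj q) (c * qk q).

Lemma quat_eq (p q : quat) :
  qre p = qre q -> qi p = qi q -> qj p = qj q -> qk p = qk q -> p = q.
Proof. destruct p, q; simpl; intros; subst; reflexivity. Qed.

Ltac qring := apply quat_eq; simpl; ring.

Lemma qnorm2_ge0 q : 0 <= qnorm2 q.
Proof. unfold qnorm2; nra. Qed.

Lemma qnorm_ge0 q : 0 <= qnorm q.
Proof. apply sqrt_pos. Qed.

Lemma qnorm_sq q : qnorm q * qnorm q = qnorm2 q.
Proof. apply sqrt_sqrt, qnorm2_ge0. Qed.

Lemma qnorm2_mul p q : qnorm2 (qmul p q) = qnorm2 p * qnorm2 q.
Proof. destruct p, q; unfold qnorm2; simpl; ring. Qed.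

Lemma qnorm2_conj q : qnorm2 (qconj q) = qnorm2 q.
Proof. destruct q; unfold qnorm2; simpl; ring. Qed.

Lemma qnorm2_scale c q : qnorm2 (qscale c q) = c * c * qnorm2 q.
Proof. destruct q; unfold qnorm2; simpl; ring. Qed.

Lemma qnorm2_one : qnorm2 qone = 1.
Proof. unfold qnorm2, qone; simpl; ring. Qed.

Lemma qnorm2_eq0 q : qnorm2 q = 0 -> q = qzero.
Proof. destruct q; unfold qnorm2; simpl; intros; apply quat_eq; simpl; nra. Qed.

Lemma qnorm_mul p q : qnorm (qmul p q) = qnorm p * qnorm q.
Proof.
  unfold qnorm; fold (qnorm2 (qmul p q)) (qnorm2 p) (qnorm2 q).
  rewrite qnorm2_mul; apply sqrt_mult; apply qnorm2_ge0.
Qed.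

Lemma qnorm_conj q : qnorm (qconj q) = qnorm q.
Proof. unfold qnorm; fold (qnorm2 (qconj q)) (qnorm2 q); now rewrite qnorm2_conj. Qed.

Lemma qnorm_zero : qnorm qzero = 0.
Proof. unfold qnorm; simpl; rewrite Rmult_0_l, !Rplus_0_l; apply sqrt_0. Qed.

Lemma qnorm_pos q : q <> qzero -> 0 < qnorm q.
Proof.
  intros Hq; destruct (Rle_lt_or_eq_dec _ _ (qnorm_ge0 q)) as [|E]; auto.
  exfalso; apply Hq, qnorm2_eq0; rewrite <- qnorm_sq, <- E; ring.
Qed.

(* Cauchy-Schwarz for the Euclidean inner product of H = R^4 (Lagrange identity). *)
Lemma qinner_le p q :
  qre p * qre q + qi p * qi q + qj p * qj q + qk p * qk q <= qnorm p * qnorm q.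
Proof.
  assert (Hp := qnorm_ge0 p); assert (Hq := qnorm_ge0 q).
  destruct (Rle_dec (qre p * qre q + qi p * qi q + qj p * qj q + qk p * qk q) 0).
  { nra. }
  apply Rsqr_incr_0_var; [|nra]; unfold Rsqr.
  replace (qnorm p * qnorm q * (qnorm p * qnorm q))
    with (qnorm p * qnorm p * (qnorm q * qnorm q)) by ring.
  rewrite !qnorm_sq; unfold qnorm2; destruct p as [a1 a2 a3 a4], q as [b1 b2 b3 b4]; simpl.
  assert (0 <= (a1*b2-a2*b1)^2 + (a1*b3-a3*b1)^2 + (a1*b4-a4*b1)^2
             + (a2*b3-a3*b2)^2 + (a2*b4-a4*b2)^2 + (a3*b4-a4*b3)^2)
    by (repeat apply Rplus_le_le_0_compat; apply pow2_ge_0).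
  nra.
Qed.

Lemma qnorm_add p q : qnorm (qadd p q) <= qnorm p + qnorm q.
Proof.
  assert (Hp := qnorm_ge0 p); assert (Hq := qnorm_ge0 q); assert (Hpq := qinner_le p q).
  apply Rsqr_incr_0_var; [|lra]; unfold Rsqr.
  replace ((qnorm p + qnorm q) * (qnorm p + qnorm q))
    with (qnorm p * qnorm p + qnorm q * qnorm q + 2 * (qnorm p * qnorm q)) by ring.
  rewrite !qnorm_sq; unfold qnorm2; destruct p, q; simpl in *; nra.
Qed.

Lemma qpolar q : exists u, qnorm2 u = 1 /\ q = qscale (qnorm q) u.
Proof.
  destruct (classic (q = qzero)) as [->|Hq].
  - exists qone; split; [apply qnorm2_one|]; rewrite qnorm_zero; qring.
  - assert (Hpos := qnorm_pos q Hq).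
    exists (qscale (/ qnorm q) q); split.
    + rewrite qnorm2_scale, <- qnorm_sq; field; lra.
    + destruct q; apply quat_eq; simpl; field; lra.
Qed.

Fixpoint rsum (n : nat) (f : nat -> R) : R :=
  match n with O => 0 | S m => rsum m f + f m end.

Lemma rsum_ext n f g : (forall i, (i < n)%nat -> f i = g i) -> rsum n f = rsum n g.
Proof.
  induction n; simpl; intros H; auto.
  rewrite IHn by (intros; apply H; lia); rewrite H by lia; auto.
Qed.

Lemma qsum_ext n f g : (forall i, (i < n)%nat -> f i = g i) -> qsum n f = qsum n g.
Proof.
  induction n; simpl; intros H; auto.
  rewrite IHn by (intros; apply H; lia); rewrite H by lia; auto.
Qed.

Lemma rsum_scal n c f : rsum n (fun i => c * f i) = c * rsum n f.
Proof. induction n; simpl; [ring|rewrite IHn; ring]. Qed.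

Lemma rsum_plus n f g : rsum n (fun i => f i + g i) = rsum n f + rsum n g.
Proof. induction n; simpl; [ring|rewrite IHn; ring]. Qed.

Lemma rsum_zero n f : (forall i, (i < n)%nat -> f i = 0) -> rsum n f = 0.
Proof.
  induction n; simpl; intros H; auto.
  rewrite IHn by (intros; apply H; lia); rewrite H by lia; ring.
Qed.

Lemma rsum_le n f g : (forall i, (i < n)%nat -> f i <= g i) -> rsum n f <= rsum n g.
Proof.
  induction n; simpl; intros H; [lra|].
  assert (rsum n f <= rsum n g) by (apply IHn; intros; apply H; lia).
  assert (f n <= g n) by (apply H; lia); lra.
Qed.

Lemma rsum_ge0 n f : (forall i, (i < n)%nat -> 0 <= f i) -> 0 <= rsum n f.
Proof. intros H; rewrite <- (rsum_zero n (fun _ => 0)) by auto; now apply rsum_le. Qed.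

Lemma rsum_delta n k c : (k < n)%nat -> rsum n (fun i => if Nat.eqb i k then c else 0) = c.
Proof.
  induction n; simpl; intros Hk; [lia|].
  destruct (Nat.eqb_spec n k) as [->|Hnk].
  - rewrite rsum_zero; [ring|]; intros i Hi.
    destruct (Nat.eqb_spec i k); [lia|auto].
  - rewrite IHn by lia; ring.
Qed.

Lemma rsum_continuous n (g : nat -> R -> R) :
  (forall i, continuity (g i)) -> continuity (fun t => rsum n (fun i => g i t)).
Proof.
  intros H; induction n; simpl.
  - apply continuity_const; intros x y; reflexivity.
  - now apply (continuity_plus (fun t => rsum n (fun i => g i t)) (g n)).
Qed.

Lemma qsum_scale n c u : qsum n (fun i => qscale (c i) u) = qscale (rsum n c) u.
Proof. induction n; simpl; [qring|rewrite IHn; qring]. Qed.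

Lemma qmul_sum_r n p f : qmul p (qsum n f) = qsum n (fun j => qmul p (f j)).
Proof. induction n; simpl; [qring|rewrite <- IHn; destruct p; qring]. Qed.

Lemma qre_sum n f : qre (qsum n f) = rsum n (fun i => qre (f i)).
Proof. induction n; simpl; auto; now rewrite IHn. Qed.

Lemma qnorm_sum n f : qnorm (qsum n f) <= rsum n (fun i => qnorm (f i)).
Proof.
  induction n; simpl; [rewrite qnorm_zero; lra|].
  eapply Rle_trans; [apply qnorm_add|lra].
Qed.

Definition sqsum (n : nat) (y : nat -> R) : R := rsum n (fun i => y i * y i).
Definition Qf (n : nat) (b : nat -> nat -> R) (y : nat -> R) : R :=
  rsum n (fun i => rsum n (fun j => b i j * y i * y j)).

Definition basis (k : nat) : nat -> R := fun i => if Nat.eqb i k then 1 else 0.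

Lemma sqsum_basis n k : (k < n)%nat -> sqsum n (basis k) = 1.
Proof.
  intros Hk; unfold sqsum; rewrite <- (rsum_delta n k 1) by auto.
  apply rsum_ext; intros i _; unfold basis; destruct (Nat.eqb i k); ring.
Qed.

Lemma Qf_basis n b k : b k k = 0 -> Qf n b (basis k) = 0.
Proof.
  intros Hb; unfold Qf, basis; apply rsum_zero; intros i _; apply rsum_zero; intros j _.
  destruct (Nat.eqb_spec i k), (Nat.eqb_spec j k); subst; rewrite ?Hb; ring.
Qed.

Lemma Qf_scale n b y c : Qf n b (fun i => y i * c) = c * c * Qf n b y.
Proof.
  unfold Qf; rewrite <- rsum_scal; apply rsum_ext; intros i _.
  rewrite <- rsum_scal; apply rsum_ext; intros j _; ring.
Qed.

Lemma Qf_nonneg n b y :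
  (forall i j, 0 <= b i j) -> (forall i, 0 <= y i) -> 0 <= Qf n b y.
Proof.
  intros Hb Hy; unfold Qf; apply rsum_ge0; intros i _; apply rsum_ge0; intros j _.
  repeat apply Rmult_le_pos; auto.
Qed.

Lemma Qf_abs_le n b y : (forall i j, 0 <= b i j) -> Qf n b y <= Qf n b (fun i => Rabs (y i)).
Proof.
  intros Hb; unfold Qf; apply rsum_le; intros i _; apply rsum_le; intros j _.
  rewrite !Rmult_assoc, <- Rabs_mult; apply Rmult_le_compat_l; [auto|apply Rle_abs].
Qed.

Lemma sqsum_abs n y : sqsum n (fun i => Rabs (y i)) = sqsum n y.
Proof. apply rsum_ext; intros i _; rewrite <- Rabs_mult, Rabs_right; [ring|nra]. Qed.

Lemma normalize_vec n b y (N := sqsum n y) : 0 < N ->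
  sqsum n (fun i => y i * / sqrt N) = 1 /\
  Qf n b (fun i => y i * / sqrt N) = Qf n b y / N.
Proof.
  intros HN; assert (HsN : / sqrt N * / sqrt N = / N)
    by (rewrite <- Rinv_mult, sqrt_sqrt; lra).
  split.
  - unfold sqsum; rewrite (rsum_ext _ _ (fun i => (/ sqrt N * / sqrt N) * (y i * y i)))
      by (intros; ring).
    rewrite rsum_scal, HsN; fold (sqsum n y) N; field; lra.
  - rewrite Qf_scale, HsN; field; lra.
Qed.

Lemma Qf_continuous n b (y : R -> nat -> R) :
  (forall i, continuity (fun t => y t i)) -> continuity (fun t => Qf n b (y t)).
Proof.
  intros Hy; unfold Qf.
  apply (rsum_continuous n (fun i t => rsum n (fun j => b i j * y t i * y t j))); intros i.
  apply (rsum_continuous n (fun j t => b i j * y t i * y t j)); intros j.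
  apply (continuity_mult (fun t => b i j * y t i) (fun t => y t j)); auto.
  apply continuity_scal; auto.
Qed.

Lemma sqsum_continuous n (y : R -> nat -> R) :
  (forall i, continuity (fun t => y t i)) -> continuity (fun t => sqsum n (y t)).
Proof.
  intros Hy; apply (rsum_continuous n (fun i t => y t i * y t i)); intros i.
  now apply (continuity_mult (fun t => y t i) (fun t => y t i)).
Qed.

(* Existence of the maximum of Q_b on the unit sphere, by compactness of the
   sphere in R^n (extreme value theorem of mathcomp-analysis). *)
Module QformMax.
Import all_boot all_order all_algebra all_classical all_reals all_analysis lra Rstruct Rstruct_topology.
Import Order.TTheory GRing.Theory Num.Theory.
Import numFieldNormedType.Exports.
Local Open Scope classical_set_scope.
Local Open Scope ring_scope.

Lemma continuous_sum (K : realType) (T : topologicalType) (I : Type) (s : seq I)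
    (g : I -> T -> K) :
  (forall i, continuous (g i)) -> continuous (fun x => \sum_(i <- s) g i x).
Proof.
move=> hg; elim: s => [|a s IH].
  rewrite (_ : (fun x => _) = (fun _ => 0)); first exact: cst_continuous.
  by apply: funext => x; rewrite big_nil.
rewrite (_ : (fun x => _) = (fun x => g a x + \sum_(i <- s) g i x)).
  by move=> x; apply: continuousD; [exact: hg|exact: IH].
by apply: funext => x; rewrite big_cons.
Qed.

(* The unit sphere of 'rV[K]_n is compact: closed and inside the cube [-1, 1]^n. *)
Lemma sphere_compact (K : realType) n :
  compact [set v : 'rV[K]_n | \sum_i v ord0 i * v ord0 i = 1].
Proof.
have cN : continuous (fun v : 'rV[K]_n => \sum_i v ord0 i * v ord0 i).
  by apply: continuous_sum => i v; apply: continuousM; apply: coord_continuous.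
apply: (@subclosed_compact _ _ [set v : 'rV[K]_n | forall i, `[-1, 1]%classic (v ord0 i)]).
- have -> : [set v : 'rV[K]_n | \sum_i v ord0 i * v ord0 i = 1]
    = (fun v : 'rV[K]_n => \sum_i v ord0 i * v ord0 i) @^-1` [set 1] by [].
  by move: cN => /continuous_closedP; apply; exact: closed_eq.
- by apply: (@rV_compact K n (fun=> `[-1, 1]%classic)) => i; exact: segment_compact.
- move=> v /= Sv i; rewrite /= in_itv /=.
  have : v ord0 i * v ord0 i <= 1.
    rewrite -Sv (bigD1 i) //= lerDl; apply: sumr_ge0 => j _; by rewrite -expr2 sqr_ge0.
  by move=> h; apply/andP; split; nra.
Qed.

Lemma qform_max_rV (K : realType) n (b : 'I_n -> 'I_n -> K) (hn : (0 < n)%N) :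
  exists2 y : 'rV[K]_n, \sum_i y ord0 i * y ord0 i = 1 &
  forall z : 'rV[K]_n, \sum_i z ord0 i * z ord0 i = 1 ->
    \sum_i \sum_j b i j * z ord0 i * z ord0 j <= \sum_i \sum_j b i j * y ord0 i * y ord0 j.
Proof.
have cf : continuous (fun v : 'rV[K]_n => \sum_i \sum_j b i j * v ord0 i * v ord0 j).
  apply: continuous_sum => i; apply: continuous_sum => j v.
  apply: (continuousM (s:=fun x : 'rV[K]_n => b i j * x ord0 i) (t:=fun x => x ord0 j));
    last exact: coord_continuous.
  apply: (continuousM (s:=fun x : 'rV[K]_n => b i j) (t:=fun x => x ord0 i));
    [exact: cst_continuous|exact: coord_continuous].
have S0 : [set v : 'rV[K]_n | \sum_i v ord0 i * v ord0 i = 1] !=set0.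
  exists (\row_j (if j == Ordinal hn then 1 else 0)).
  rewrite /= (bigD1 (Ordinal hn)) //= big1 ?mxE ?eqxx; first by rewrite mulr1 addr0.
  by move=> i /negbTE hi; rewrite mxE hi mulr0.
have [c Sc hc] := EVT_max_rV S0 (sphere_compact K n) (continuous_subspaceT cf).
by exists c => [|z Sz]; [move: Sc; rewrite inE|apply: hc; rewrite inE].
Qed.

Lemma rsum_big n (f : nat -> R) : rsum n f = \sum_(i < n) f i.
Proof. by elim: n => [|n IH] /=; rewrite ?big_ord0 // big_ord_recr /= IH. Qed.

Lemma Qf_big n b z : Qf n b z = \sum_(i < n) \sum_(j < n) b i j * z i * z j.
Proof. by rewrite /Qf rsum_big; apply: eq_bigr => i _; rewrite rsum_big. Qed.

Lemma qform_max m (b : nat -> nat -> R) :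
  exists y : nat -> R, sqsum m.+1 y = 1%R /\
    forall z, sqsum m.+1 z = 1%R -> Rle (Qf m.+1 b z) (Qf m.+1 b y).
Proof.
have [c Sc hc] := @qform_max_rV R _ (fun i j : 'I_m.+1 => b i j) (ltn0Sn m).
exists (fun k => c ord0 (inord k)); split.
  by rewrite /sqsum rsum_big -Sc; apply: eq_bigr => i _; rewrite inord_val.
move=> z hz; apply/RleP; rewrite !Qf_big.
have -> : \sum_(i < m.+1) \sum_(j < m.+1) b i j * c ord0 (inord i) * c ord0 (inord j)
        = \sum_(i < m.+1) \sum_(j < m.+1) b i j * c ord0 i * c ord0 j.
  by apply: eq_bigr => i _; apply: eq_bigr => j _; rewrite !inord_val.
have -> : \sum_(i < m.+1) \sum_(j < m.+1) b i j * z i * z j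
        = \sum_(i < m.+1) \sum_(j < m.+1)
            b i j * (\row_(k < m.+1) z k) ord0 i * (\row_(k < m.+1) z k) ord0 j.
  by apply: eq_bigr => i _; apply: eq_bigr => j _; rewrite !mxE.
apply: hc; rewrite -hz /sqsum rsum_big; apply: eq_bigr => i _; by rewrite mxE.
Qed.
End QformMax.

Lemma qform_max_nonneg m b : (forall i j, 0 <= b i j) ->
  exists y0, (forall i, 0 <= y0 i) /\ sqsum (S m) y0 = 1 /\
    forall z, sqsum (S m) z = 1 -> Qf (S m) b z <= Qf (S m) b y0.
Proof.
  intros Hb; destruct (QformMax.qform_max m b) as [y [Hy Hmax]].
  exists (fun i => Rabs (y i)); split; [intros; apply Rabs_pos|split].
  - now rewrite sqsum_abs.
  - intros z Hz; eapply Rle_trans; [apply Hmax, Hz|now apply Qf_abs_le].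
Qed.

Lemma segment_sqsum_pos n y1 y0 t :
  (forall i, 0 <= y1 i) -> (forall i, 0 <= y0 i) -> sqsum n y1 = 1 -> sqsum n y0 = 1 ->
  0 <= t <= 1 -> 0 < sqsum n (fun i => (1 - t) * y1 i + t * y0 i).
Proof.
  intros H1 H0 U1 U0 Ht.
  apply Rlt_le_trans with (rsum n (fun i => (1 - t) * (1 - t) * (y1 i * y1 i)
                                             + t * t * (y0 i * y0 i))).
  - rewrite rsum_plus, !rsum_scal; fold (sqsum n y1) (sqsum n y0); rewrite U1, U0; nra.
  - apply rsum_le; intros i _; specialize (H1 i); specialize (H0 i).
    assert (0 <= (1 - t) * t * (y1 i * y0 i)) by (apply Rmult_le_pos; nra); nra.
Qed.

Lemma ivt01 F : continuity F -> F 0 <= 0 -> 0 <= F 1 -> exists t, 0 <= t <= 1 /\ F t = 0.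
Proof.
  intros Hc H0 H1.
  destruct (Req_dec (F 0) 0); [exists 0; split; [lra|auto]|].
  destruct (Req_dec (F 1) 0); [exists 1; split; [lra|auto]|].
  destruct (IVT F 0 1 Hc ltac:(lra) ltac:(lra) ltac:(lra)) as [t [Ht Ft]]; eauto.
Qed.

Lemma qform_intermediate n b y1 y0 rho :
  (forall i, 0 <= y1 i) -> (forall i, 0 <= y0 i) -> sqsum n y1 = 1 -> sqsum n y0 = 1 ->
  Qf n b y1 <= rho <= Qf n b y0 ->
  exists y, sqsum n y = 1 /\ Qf n b y = rho.
Proof.
  intros H1 H0 U1 U0 Hrho.
  set (v := fun t i => (1 - t) * y1 i + t * y0 i).
  assert (Hv : forall i, continuity (fun t => v t i)) by (intros i; unfold v; reg).
  assert (Hv0 : v 0 = y1) by (extensionality i; unfold v; ring).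
  assert (Hv1 : v 1 = y0) by (extensionality i; unfold v; ring).
  set (F := fun t => Qf n b (v t) - rho * sqsum n (v t)).
  assert (HF : continuity F).
  { apply continuity_minus; [now apply Qf_continuous|].
    apply continuity_scal; now apply sqsum_continuous. }
  destruct (ivt01 F HF) as [t [Ht Ft]];
    [unfold F; rewrite Hv0, U1; lra|unfold F; rewrite Hv1, U0; lra|].
  assert (HN := segment_sqsum_pos n y1 y0 t H1 H0 U1 U0 Ht); fold (v t) in HN.
  destruct (normalize_vec n b (v t) HN) as [Hu HQ].
  exists (fun i => v t i * / sqrt (sqsum n (v t))); split; auto.
  unfold F in Ft; rewrite HQ, (Rminus_diag_uniq _ _ Ft); field; lra.
Qed.

Lemma unit_vec_abs n x : qdot n x x = qone -> sqsum n (fun i => qnorm (x i)) = 1.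
Proof.
  intros H; assert (E := f_equal qre H); unfold qdot in E; rewrite qre_sum in E.
  simpl in E; rewrite <- E; apply rsum_ext; intros i _.
  rewrite qnorm_sq; unfold qnorm2; destruct (x i); simpl; ring.
Qed.

Lemma numrange_value_bound n A x :
  qnorm (qdot n x (qmatvec n A x))
  <= Qf n (fun i j => qnorm (A i j)) (fun i => qnorm (x i)).
Proof.
  unfold qdot, qmatvec, Qf; eapply Rle_trans; [apply qnorm_sum|].
  apply rsum_le; intros i _; rewrite qnorm_mul, qnorm_conj.
  eapply Rle_trans; [apply Rmult_le_compat_l; [apply qnorm_ge0|apply qnorm_sum]|].
  rewrite <- rsum_scal; apply Req_le, rsum_ext; intros j _; rewrite qnorm_mul; ring.
Qed.

Definition gpath (n : nat) (A : qmat) (l : list nat) : Prop :=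
  NoDup l /\ Forall (fun v => (v < n)%nat) l /\
  forall k, (S k < length l)%nat -> gadj A (nth k l O) (nth (S k) l O).

Lemma gadj_sym A i j : gadj A i j -> gadj A j i.
Proof. unfold gadj; tauto. Qed.

Lemma gpath_length n A l : gpath n A l -> (length l <= n)%nat.
Proof.
  intros [Hnd [Hf _]]; rewrite <- (length_seq n 0); apply NoDup_incl_length; auto.
  intros x Hx; apply in_seq; rewrite Forall_forall in Hf; specialize (Hf x Hx); lia.
Qed.

Lemma bounded_max (P : nat -> Prop) n : (forall m, P m -> (m <= n)%nat) ->
  (exists m, P m) -> exists m, P m /\ forall m', P m' -> (m' <= m)%nat.
Proof.
  revert P; induction n as [|n IH]; intros P Hb [m0 H0].
  - exists m0; split; auto; intros m' Hm'; specialize (Hb _ Hm'); lia.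
  - destruct (classic (P (S n))) as [HS|HS]; [exists (S n); auto|].
    apply IH; [|eauto]; intros m Hm; specialize (Hb m Hm).
    destruct (Nat.eq_dec m (S n)); [subst; contradiction|lia].
Qed.

Lemma back_edge_cycle n A l k : gpath n A l -> (2 <= k < length l)%nat ->
  gadj A (nth k l O) (nth 0 l O) -> has_long_cycle n A.
Proof.
  intros [Hnd [Hf Hadj]] Hk Hback; exists (firstn (S k) l).
  assert (Hc : length (firstn (S k) l) = S k) by (apply firstn_length_le; lia).
  rewrite <- (firstn_skipn (S k) l) in Hnd, Hf; apply Forall_app in Hf.
  split; [lia|split; [eapply NoDup_app_remove_r; eauto|split; [tauto|]]].
  rewrite Hc; intros idx Hidx; rewrite !nth_firstn.
  destruct (Nat.eq_dec idx k) as [->|Hne].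
  - rewrite Nat.Div0.mod_same; simpl.
    rewrite (proj2 (Nat.ltb_lt k (S k))) by lia; exact Hback.
  - rewrite (Nat.mod_small (S idx)) by lia.
    rewrite !(proj2 (Nat.ltb_lt _ (S k))) by lia; apply Hadj; lia.
Qed.

(* A graph without loops and cycles but with an edge has a leaf: the head of a
   longest simple path, whose only neighbour is the next vertex of the path. *)
Lemma leaf_exists n A : (forall i, (i < n)%nat -> ~ gadj A i i) -> ~ has_long_cycle n A ->
  (exists i j, (i < n)%nat /\ (j < n)%nat /\ gadj A i j) ->
  exists v p, (v < n)%nat /\ (p < n)%nat /\ gadj A v p /\
    forall w, (w < n)%nat -> gadj A v w -> w = p.
Proof.
  intros Hloop Hcyc [i [j [Hi [Hj Hij]]]].
  assert (Hne : i <> j) by (intros ->; exact (Hloop j Hj Hij)).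
  set (P := fun m => exists l, gpath n A l /\ length l = m /\ (2 <= m)%nat).
  destruct (bounded_max P n) as [m [[l [Hl [Hlen H2]]] Hmax]].
  { intros m' [l' [Hl' [<- _]]]; eapply gpath_length; eauto. }
  { exists 2%nat, (i :: j :: nil); split; [|auto].
    split; [|split; [repeat constructor; auto|]].
    - constructor; [simpl; intuition|repeat constructor; auto].
    - intros [|k] Hk; simpl in *; [auto|lia]. }
  destruct l as [|v [|p rest]]; simpl in Hlen; try lia.
  pose proof Hl as [Hnd [Hf Hadj]]; rewrite Forall_forall in Hf.
  assert (Hv : (v < n)%nat) by (apply Hf; simpl; auto).
  exists v, p; split; [auto|split; [apply Hf; simpl; auto|split; [apply (Hadj 0%nat); simpl; lia|]]].
  intros w Hw Hvw; destruct (Nat.eq_dec w p) as [|Hwp]; auto; exfalso.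
  destruct (In_dec Nat.eq_dec w (v :: p :: rest)) as [Hin|Hnin].
  - destruct (In_nth _ w 0%nat Hin) as [[|[|k]] [Hk <-]]; simpl in *.
    + exact (Hloop v Hv Hvw).
    + auto.
    + apply Hcyc, (back_edge_cycle n A (v :: p :: rest) (S (S k))); auto.
      * simpl; lia.
      * now apply gadj_sym.
  - assert (HP : P (S m)).
    { exists (w :: v :: p :: rest); split; [|simpl; split; lia].
      split; [constructor; auto|split; [constructor; auto; now apply Forall_forall|]].
      intros [|k] Hk; simpl; [now apply gadj_sym|apply Hadj; simpl in *; lia]. }
    specialize (Hmax _ HP); lia.
Qed.

Definition oriented (n : nat) (A : qmat) : Prop :=
  forall i j, (i < n)%nat -> (j < n)%nat -> A i j <> qzero -> A j i = qzero.

Lemma upper_triangular_oriented n A :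
  upper_triangular n A -> cycle_free n A -> oriented n A.
Proof.
  intros Hut [Hloop _] i j Hi Hj Ha.
  destruct (Nat.lt_total i j) as [Hlt|[->|Hlt]].
  - now apply Hut.
  - exfalso; apply (Hloop j Hj); now left.
  - exfalso; apply Ha, Hut; auto.
Qed.

Definition edge_labeling (n : nat) (A : qmat) (u : quat) (d : nat -> quat) : Prop :=
  (forall i, qnorm2 (d i) = 1) /\
  forall i j, (i < n)%nat -> (j < n)%nat -> A i j <> qzero ->
    qmul (qmul (qconj (d i)) (A i j)) (d j) = qscale (qnorm (A i j)) u.

Lemma leaf_label_out a d u : a <> qzero -> qnorm2 d = 1 -> qnorm2 u = 1 ->
  exists e, qnorm2 e = 1 /\ qmul (qmul (qconj e) a) d = qscale (qnorm a) u.
Proof.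
  intros Ha Hd Hu; assert (Hs := qnorm_pos a Ha).
  exists (qscale (/ qnorm a) (qmul (qmul a d) (qconj u))); split.
  - rewrite qnorm2_scale, !qnorm2_mul, qnorm2_conj, Hd, Hu, <- qnorm_sq; field; lra.
  - assert (E : qmul (qmul (qconj (qscale (/ qnorm a) (qmul (qmul a d) (qconj u)))) a) d
                = qscale (/ qnorm a * (qnorm2 a * qnorm2 d)) u)
      by (destruct a, d, u; unfold qnorm2; qring).
    rewrite E, Hd, <- qnorm_sq; destruct u; apply quat_eq; simpl; field; lra.
Qed.

Lemma leaf_label_in a d u : a <> qzero -> qnorm2 d = 1 -> qnorm2 u = 1 ->
  exists e, qnorm2 e = 1 /\ qmul (qmul (qconj d) a) e = qscale (qnorm a) u.
Proof.
  intros Ha Hd Hu; assert (Hs := qnorm_pos a Ha).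
  exists (qscale (/ qnorm a) (qmul (qmul (qconj a) d) u)); split.
  - rewrite qnorm2_scale, !qnorm2_mul, qnorm2_conj, Hd, Hu, <- qnorm_sq; field; lra.
  - assert (E : qmul (qmul (qconj d) a) (qscale (/ qnorm a) (qmul (qmul (qconj a) d) u))
                = qscale (/ qnorm a * (qnorm2 a * qnorm2 d)) u)
      by (destruct a, d, u; unfold qnorm2; qring).
    rewrite E, Hd, <- qnorm_sq; destruct u; apply quat_eq; simpl; field; lra.
Qed.

Definition remove_vertex (A : qmat) (v : nat) : qmat :=
  fun i j => if orb (Nat.eqb i v) (Nat.eqb j v) then qzero else A i j.

Lemma remove_vertex_gadj A v i j : gadj (remove_vertex A v) i j -> gadj A i j.
Proof.
  unfold gadj, remove_vertex.
  destruct (orb (Nat.eqb i v) _), (orb (Nat.eqb j v) _); tauto.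
Qed.

Lemma remove_vertex_cycle_free n A v : cycle_free n A -> cycle_free n (remove_vertex A v).
Proof.
  intros [Hloop Hcyc]; split.
  - intros i Hi Hg; exact (Hloop i Hi (remove_vertex_gadj A v i i Hg)).
  - intros [l [H1 [H2 [H3 H4]]]]; apply Hcyc; exists l; repeat split; auto.
    intros k Hk; apply (remove_vertex_gadj A v), H4, Hk.
Qed.

Lemma remove_vertex_oriented n A v : oriented n A -> oriented n (remove_vertex A v).
Proof.
  intros Hor i j Hi Hj; unfold remove_vertex.
  destruct (Nat.eqb i v), (Nat.eqb j v); simpl; auto; apply Hor; auto.
Qed.

Lemma labeling_extend_leaf n A u v p d' :
  (v < n)%nat -> (p < n)%nat -> p <> v -> qnorm2 u = 1 -> oriented n A ->
  gadj A v p -> (forall w, (w < n)%nat -> gadj A v w -> w = p) ->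
  edge_labeling n (remove_vertex A v) u d' -> exists d, edge_labeling n A u d.
Proof.
  intros Hv Hp Hpv Hu Hor Hvp Hleaf [Hd'1 Hd'2].
  assert (He : exists e, qnorm2 e = 1 /\
            (A v p <> qzero -> qmul (qmul (qconj e) (A v p)) (d' p) = qscale (qnorm (A v p)) u) /\
            (A p v <> qzero -> qmul (qmul (qconj (d' p)) (A p v)) e = qscale (qnorm (A p v)) u)).
  { destruct (classic (A v p = qzero)) as [Hz|Hnz].
    - assert (Hpv' : A p v <> qzero) by (destruct Hvp; [contradiction|auto]).
      destruct (leaf_label_in (A p v) (d' p) u Hpv' (Hd'1 p) Hu) as [e [He1 He2]].
      exists e; repeat split; auto; contradiction.
    - destruct (leaf_label_out (A v p) (d' p) u Hnz (Hd'1 p) Hu) as [e [He1 He2]].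
      exists e; repeat split; auto; intros Hpv'; exfalso; apply Hpv', Hor; auto. }
  destruct He as [e [He1 [Heout Hein]]].
  exists (fun i => if Nat.eqb i v then e else d' i); split.
  { intros i; destruct (Nat.eqb i v); auto. }
  intros i j Hi Hj Ha.
  destruct (Nat.eqb_spec i v) as [->|Hiv].
  - assert (j = p) as -> by (apply Hleaf; auto; now left).
    rewrite (proj2 (Nat.eqb_neq p v) Hpv); auto.
  - destruct (Nat.eqb_spec j v) as [->|Hjv].
    + assert (i = p) as -> by (apply Hleaf; auto; now right); auto.
    + assert (E : remove_vertex A v i j = A i j)
        by (unfold remove_vertex; now rewrite (proj2 (Nat.eqb_neq i v) Hiv),
                                               (proj2 (Nat.eqb_neq j v) Hjv)).
      rewrite <- E; apply Hd'2; auto; now rewrite E.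
Qed.

(* Every oriented cycle-free matrix has a labeling, for any unit quaternion u.
   Induction on a list L of vertices covering all edges: peel off a leaf. *)
Lemma labeling_exists n u (Hu : qnorm2 u = 1) : forall k A L, (length L <= k)%nat ->
  (forall i j, (i < n)%nat -> (j < n)%nat -> A i j <> qzero -> In i L /\ In j L) ->
  oriented n A -> cycle_free n A -> exists d, edge_labeling n A u d.
Proof.
  induction k as [|k IH]; intros A L HL Hcov Hor Hcf;
    (destruct (classic (exists i j, (i < n)%nat /\ (j < n)%nat /\ A i j <> qzero))
       as [[i [j [Hi [Hj Ha]]]]|Hnone];
     [|exists (fun _ => qone); split; [intros; apply qnorm2_one|];
       intros i j Hi Hj Ha; exfalso; apply Hnone; eauto]).
  - destruct L; [now destruct (Hcov i j Hi Hj Ha)|simpl in HL; lia].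
  - pose proof Hcf as [Hloop Hcyc].
    destruct (leaf_exists n A Hloop Hcyc) as [v [p [Hv [Hp [Hvp Hleaf]]]]].
    { exists i, j; repeat split; auto; now left. }
    assert (Hpv : p <> v) by (intros ->; exact (Hloop v Hv Hvp)).
    assert (HvL : In v L) by (destruct Hvp as [H|H]; [apply (Hcov v p)|apply (Hcov p v)]; auto).
    destruct (IH (remove_vertex A v) (remove Nat.eq_dec v L)) as [d' Hd'].
    + assert (Hlt := remove_length_lt Nat.eq_dec L v HvL); lia.
    + intros i' j' Hi' Hj'; unfold remove_vertex.
      destruct (Nat.eqb_spec i' v), (Nat.eqb_spec j' v); simpl; try contradiction.
      intros Ha'; destruct (Hcov i' j' Hi' Hj' Ha'); split; apply in_in_remove; auto.
    + now apply remove_vertex_oriented.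
    + now apply remove_vertex_cycle_free.
    + now apply (labeling_extend_leaf n A u v p d').
Qed.

Lemma labeled_vector_value n A u d y : edge_labeling n A u d -> sqsum n y = 1 ->
  qdot n (fun i => qscale (y i) (d i)) (fun i => qscale (y i) (d i)) = qone /\
  qdot n (fun i => qscale (y i) (d i)) (qmatvec n A (fun i => qscale (y i) (d i)))
  = qscale (Qf n (fun i j => qnorm (A i j)) y) u.
Proof.
  intros [Hd1 Hd2] Hy; split.
  - unfold qdot; rewrite (qsum_ext _ _ (fun i => qscale (y i * y i) qone)).
    + rewrite qsum_scale; fold (sqsum n y); rewrite Hy; qring.
    + intros i _; transitivity (qscale (y i * y i * qnorm2 (d i)) qone).
      { destruct (d i); unfold qnorm2; qring. }
      rewrite Hd1; f_equal; ring.
  - unfold qdot, qmatvec, Qf.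
    rewrite <- qsum_scale; apply qsum_ext; intros i Hi.
    rewrite qmul_sum_r, <- qsum_scale; apply qsum_ext; intros j Hj.
    transitivity (qscale (y i * y j) (qmul (qmul (qconj (d i)) (A i j)) (d j))).
    { destruct (d i), (d j), (A i j); qring. }
    destruct (classic (A i j = qzero)) as [Hz|Hnz].
    + rewrite Hz, qnorm_zero; destruct (d i), (d j), u; qring.
    + rewrite Hd2 by auto; destruct u; qring.
Qed.

Lemma numrange_of_qform_value n A y q : oriented n A -> cycle_free n A ->
  sqsum n y = 1 -> qnorm q = Qf n (fun i j => qnorm (A i j)) y -> numrange n A q.
Proof.
  intros Hor Hcf Hy Hq; destruct (qpolar q) as [u [Hu Hqu]].
  destruct (labeling_exists n u Hu n A (seq 0 n)) as [d Hd]; auto.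
  { now rewrite length_seq. }
  { intros i j Hi Hj _; split; apply in_seq; lia. }
  destruct (labeled_vector_value n A u d y Hd Hy) as [Hx Hval].
  exists (fun i => qscale (y i) (d i)); split; auto; now rewrite Hval, <- Hq.
Qed.

Theorem corollary3p7 (n : nat) (A : qmat) (hn : (1 <= n)%nat)
  (hut : upper_triangular n A) (hnil : nilpotent n A) (hcf : cycle_free n A) :
  exists r : R, 0 <= r /\ forall q : quat, numrange n A q <-> qdisk qzero r q.
Proof.
  destruct n as [|m]; [lia|].
  set (b := fun i j => qnorm (A i j)).
  assert (Hb : forall i j, 0 <= b i j) by (intros; apply qnorm_ge0).
  destruct (qform_max_nonneg m b Hb) as [y0 [Hy0 [Uy0 Hmax]]].
  exists (Qf (S m) b y0); split; [now apply Qf_nonneg|].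
  intros q; unfold qdisk; replace (qsub q qzero) with q by (destruct q; qring); split.
  - intros [x [Hx ->]].
    eapply Rle_trans; [apply numrange_value_bound|apply Hmax, unit_vec_abs, Hx].
  - intros Hq.
    assert (Hb00 : b 0%nat 0%nat = 0).
    { unfold b; destruct (classic (A 0%nat 0%nat = qzero)) as [->|Hne];
        [apply qnorm_zero|exfalso; apply (proj1 hcf 0%nat); [lia|now left]]. }
    assert (He0 : forall i, 0 <= basis 0 i)
      by (intros i; unfold basis; destruct (Nat.eqb i 0); lra).
    destruct (qform_intermediate (S m) b (basis 0) y0 (qnorm q) He0 Hy0
                (sqsum_basis (S m) 0 ltac:(lia)) Uy0) as [y [Uy Hy]].
    { rewrite Qf_basis by exact Hb00; split; [apply qnorm_ge0|exact Hq]. }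
    apply (numrange_of_qform_value (S m) A y q); auto.
    now apply upper_triangular_oriented.
Qed.
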